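(* Let $A\in\mathbb{R}^{n\times n}$, $B\in\mathbb{R}^{n\times m}$ with $(A,B)$ stabilizable, $Q\succ0$, $R\succ0$, $\alpha>1$, $\gamma,\eta\ge 0$, and let $\tilde F,\tilde P,V$ be as in the context. Consider $\dot x=Ax+Bu$, $x(0)=x_0$, under $u(t)=F_kx_k$ for $t\in[t_k,t_{k+1})$, $\delta_k=t_{k+1}-t_k$, $0=t_0<t_1<\cdots$. If for every $k$ the pair $(F_k,\delta_k)$ is a feasible solution of problem (P1) below (with the current state $x_k$), then the resulting control law is stabilizing and, for all nonzero $x_0$, $\nu(x_0)\le\alpha-1$. Problem (P1), for given $x_k$: minimize over $F_k\in\mathbb{R}^{m\times n}$, $\delta_k$ the objective $-\delta_k+\gamma\|F_k\|_0+\eta\|u_k\|_0$ with $u_k=F_kx_k$, subject to the dynamics with the held input $u(t)=F_kx_k$ and the constraint $J_k(F_k,\xi;x_k)\le\alpha\big(V(x_k)-V(x(t_k+\xi))\big)$ for all $\xi\in[0,\delta_k]$.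
   Context: $x_k:=x(t_k)$. $\tilde F\in\mathbb{R}^{m\times n}$ is a fixed gain with $A+B\tilde F$ Hurwitz, $\tilde P\succ0$ is the unique solution of $(A+B\tilde F)^T\tilde P+\tilde P(A+B\tilde F)+Q+\tilde F^TR\tilde F=0$, and $V(x):=x^T\tilde Px$. $\|M\|_0$ denotes the number of nonzero entries of a matrix or vector $M$. For $\xi\ge0$, $J_k(F_k,\xi;x_k):=\int_{t_k}^{t_k+\xi}(x^TQx+u^TRu)\,dt$ with $x$ the trajectory from $x(t_k)=x_k$ under the held input $u=F_kx_k$. $J(x_0):=\sum_{k\ge0}J_k(F_k,\delta_k;x_k)$, $\tilde J(x_0):=x_0^T\tilde Px_0$, $\nu(x_0):=(J(x_0)-\tilde J(x_0))/\tilde J(x_0)$. *)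

From HB Require Import structures.
From mathcomp Require Import all_boot all_order all_algebra.
From mathcomp Require Import all_classical all_reals all_analysis.
From mathcomp.real_closed Require Import complex.
Set Implicit Arguments. Unset Strict Implicit. Unset Printing Implicit Defensive.
Import Order.TTheory GRing.Theory Num.Theory.
Import numFieldNormedType.Exports.
Local Open Scope ring_scope.

Definition qf (R : realType) (n : nat) (M : 'M[R]_n) (x : 'cV[R]_n) : R :=
  (x^T *m M *m x) ord0 ord0.

Definition posdef (R : realType) (n : nat) (M : 'M[R]_n) : Prop :=
  M^T = M /\ forall x : 'cV[R]_n, x != 0 -> 0 < qf M x.

Definition hurwitz (R : realType) (n : nat) (M : 'M[R]_n) : Prop :=
  forall z : R[i], root (map_poly (fun r : R => (r +i* 0)%C) (char_poly M)) z ->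
    complex.Re z < 0.

Definition stabilizable (R : realType) (n m : nat)
  (A : 'M[R]_n) (B : 'M[R]_(n, m)) : Prop :=
  exists F : 'M[R]_(m, n), hurwitz (A + B *m F).

Definition Jk (R : realType) (n m : nat) (Q : 'M[R]_n) (Rw : 'M[R]_m)
  (x : R -> 'cV[R]_n) (u : 'cV[R]_m) (tk xi : R) : \bar R :=
  (\int[lebesgue_measure]_(s in `[tk%R, (tk + xi)%R]) (qf Q (x s) + qf Rw u)%:E)%E.

(* Feasibility of (P1) at step k: the decrease constraint for all xi in [0, delta_k].
   (The objective -delta_k + gamma ||F_k||_0 + eta ||u_k||_0 does not affect feasibility.) *)
Definition P1_feasible (R : realType) (n m : nat) (Q : 'M[R]_n) (Rw : 'M[R]_m)
  (P : 'M[R]_n) (alpha : R) (x : R -> 'cV[R]_n) (Fk : 'M[R]_(m, n))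
  (tk deltak : R) : Prop :=
  forall xi : R, 0 <= xi <= deltak ->
    (Jk Q Rw x (Fk *m x tk) tk xi <=
       (alpha * (qf P (x tk) - qf P (x (tk + xi))))%:E)%E.

Definition Jtot (R : realType) (n m : nat) (Q : 'M[R]_n) (Rw : 'M[R]_m)
  (x : R -> 'cV[R]_n) (F : nat -> 'M[R]_(m, n)) (t : nat -> R) : \bar R :=
  (\sum_(0 <= k <oo) Jk Q Rw x (F k *m x (t k)) (t k) (t k.+1 - t k))%E.

(* nu(x0) = (J(x0) - Jtilde(x0)) / Jtilde(x0), Jtilde(x0) = x0^T P x0 *)
Definition nu (R : realType) (n m : nat) (Q : 'M[R]_n) (Rw : 'M[R]_m)
  (P : 'M[R]_n) (x : R -> 'cV[R]_n) (F : nat -> 'M[R]_(m, n)) (t : nat -> R)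
  (x0 : 'cV[R]_n) : \bar R :=
  ((Jtot Q Rw x F t - (qf P x0)%:E) * ((qf P x0)^-1)%:E)%E.

(* Feasibility of (P1) says that the running cost accumulated on [t_k, t_k + xi]
   is at most alpha times the decrease of V = x^T Pt x over that interval.  Hence
   V never exceeds V(x_0), and the costs telescope to J(x_0) <= alpha V(x_0),
   which is nu(x_0) <= alpha - 1.
   For convergence, h = |x|^2 satisfies |h'| <= C cost and h <= c cost, by
   positive definiteness of Q and Rw (compactness of the unit sphere).  So both
   the oscillation of h on [t_k, t_{k+1}] and its minimum there times
   t_{k+1} - t_k are controlled by V(t_k) - V(t_{k+1}).  Since V(t_k) converges,
   h is eventually almost constant, and it cannot stay above a positive level
   because t_k -> +oo would then force an unbounded decrease of V. *)

From HB Require Import structures.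
From mathcomp Require Import all_boot all_order all_algebra.
From mathcomp Require Import all_classical all_reals all_analysis.
From mathcomp.real_closed Require Import complex.
From mathcomp Require Import measurable_realfun ring lra.
Import Order.TTheory GRing.Theory Num.Theory.
Import numFieldNormedType.Exports.
Local Open Scope ring_scope.
Local Open Scope classical_set_scope.

Set Implicit Arguments. Unset Strict Implicit. Unset Printing Implicit Defensive.

Section QuadraticForms.
Variable R : realType.

Definition sqnorm p (y : 'cV[R]_p) : R := \sum_i y i ord0 ^+ 2.

Lemma sqnorm_ge0 p (y : 'cV[R]_p) : 0 <= sqnorm y.
Proof. by apply: sumr_ge0 => i _; rewrite sqr_ge0. Qed.

Lemma sqr_coord_le_sqnorm p (y : 'cV[R]_p) i : y i ord0 ^+ 2 <= sqnorm y.
Proof. by rewrite /sqnorm (bigD1 i) //= lerDl; apply: sumr_ge0 => j _; rewrite sqr_ge0. Qed.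

Lemma sqnorm0 p : sqnorm (0 : 'cV[R]_p) = 0.
Proof. by rewrite /sqnorm big1 // => i _; rewrite mxE expr0n. Qed.

Lemma sqnorm_eq0 p (y : 'cV[R]_p) : (sqnorm y == 0) = (y == 0).
Proof.
apply/idP/eqP => [|->]; last by rewrite sqnorm0.
rewrite psumr_eq0 => [/allP y0|i _]; last exact: sqr_ge0.
apply/matrixP => i j; rewrite (ord1 j) mxE; apply/eqP.
by rewrite -sqrf_eq0; exact: y0 (mem_index_enum i).
Qed.

Lemma sqnormZ p a (y : 'cV[R]_p) : sqnorm (a *: y) = a ^+ 2 * sqnorm y.
Proof. by rewrite /sqnorm mulr_sumr; apply: eq_bigr => i _; rewrite mxE exprMn. Qed.

Lemma qfE p (M : 'M[R]_p) y : qf M y = \sum_i y i ord0 * (M *m y) i ord0.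
Proof. by rewrite /qf -mulmxA mxE; apply: eq_bigr => i _; rewrite mxE. Qed.

Lemma qfZ p (M : 'M[R]_p) a y : qf M (a *: y) = a ^+ 2 * qf M y.
Proof.
rewrite !qfE mulr_sumr; apply: eq_bigr => i _.
by rewrite linearZ /= !mxE; ring.
Qed.

Lemma posdef_qf_ge0 p (M : 'M[R]_p) y : posdef M -> 0 <= qf M y.
Proof.
move=> [_ PM]; have [->|y0] := eqVneq y 0; last exact/ltW/PM.
by rewrite /qf mulmx0 mxE.
Qed.

Definition mx_abs_sum p q (M : 'M[R]_(p, q)) : R := \sum_i \sum_j `|M i j|.

Lemma mx_abs_sum_ge0 p q (M : 'M[R]_(p, q)) : 0 <= mx_abs_sum M.
Proof. by apply: sumr_ge0 => i _; exact: sumr_ge0. Qed.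

Lemma norm_dot_mulmx_le p q (M : 'M[R]_(p, q)) (y : 'cV[R]_p) (z : 'cV[R]_q) :
  `|\sum_i y i ord0 * (M *m z) i ord0| <= mx_abs_sum M * (sqnorm y + sqnorm z).
Proof.
apply: (le_trans (ler_norm_sum _ _ _)); rewrite mulr_suml; apply: ler_sum => i _.
rewrite mxE mulr_sumr big_distrl /=; apply: (le_trans (ler_norm_sum _ _ _)).
apply: ler_sum => j _; rewrite mulrCA normrM ler_wpM2l //.
have yz : `|y i ord0 * z j ord0| <= y i ord0 ^+ 2 + z j ord0 ^+ 2.
  rewrite normrM -[y i ord0 ^+ 2]real_normK ?num_real // -[z j ord0 ^+ 2]real_normK ?num_real //.
  by have := normr_ge0 (y i ord0); have := normr_ge0 (z j ord0); nra.
by apply: (le_trans yz); apply: lerD; apply: sqr_coord_le_sqnorm.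
Qed.

Lemma norm_dot_affine_le p q (M : 'M[R]_p) (N : 'M[R]_(p, q)) (y : 'cV[R]_p) (z : 'cV[R]_q) :
  `|\sum_i y i ord0 * (M *m y + N *m z) i ord0| <=
    (2 * mx_abs_sum M + mx_abs_sum N) * (sqnorm y + sqnorm z).
Proof.
rewrite (_ : \sum_i _ = \sum_i y i ord0 * (M *m y) i ord0 + \sum_i y i ord0 * (N *m z) i ord0).
  have := norm_dot_mulmx_le M y y; have := norm_dot_mulmx_le N y z.
  have := ler_normD (\sum_i y i ord0 * (M *m y) i ord0) (\sum_i y i ord0 * (N *m z) i ord0).
  have := mx_abs_sum_ge0 M; have := sqnorm_ge0 y; have := sqnorm_ge0 z; nra.
by rewrite -big_split; apply: eq_bigr => i _; rewrite mxE mulrDr.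
Qed.

End QuadraticForms.

Section CoordinateContinuity.
Variables (R : realType) (T : topologicalType).

Lemma continuous_sum I (r : seq I) (f : I -> T -> R) :
  (forall i, continuous (f i)) -> continuous (fun s => \sum_(i <- r) f i s).
Proof.
move=> cf; rewrite (_ : (fun s => _) = \sum_(i <- r) f i); last first.
  by apply/funext => s; rewrite fct_sumE.
apply: (big_ind (fun g : T -> R => continuous g)) => // [|g1 g2 c1 c2 s].
  exact: cst_continuous.
exact: continuousD (c1 s) (c2 s).
Qed.

Lemma continuous_dotmx p (y z : T -> 'cV[R]_p) :
  (forall i, continuous (fun s => y s i ord0)) ->
  (forall i, continuous (fun s => z s i ord0)) ->
  continuous (fun s => \sum_i y s i ord0 * z s i ord0).
Proof. by move=> cy cz; apply: continuous_sum => i s; exact: continuousM (@cy i s) (@cz i s). Qed.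

Variables (p : nat) (y : T -> 'cV[R]_p).
Hypothesis cy : forall i, continuous (fun s => y s i ord0).

Lemma continuous_mulmx_coord q (M : 'M[R]_(q, p)) i :
  continuous (fun s => (M *m y s) i ord0).
Proof.
under eq_fun do rewrite mxE.
by apply: continuous_sum => j s; exact: continuousM (@cst_continuous _ _ (M i j) s) (@cy j s).
Qed.

Lemma continuous_qf (M : 'M[R]_p) : continuous (fun s => qf M (y s)).
Proof.
under eq_fun do rewrite qfE.
by apply: continuous_dotmx => //; exact: continuous_mulmx_coord.
Qed.

Lemma continuous_sqnorm : continuous (fun s => sqnorm (y s)).
Proof.
rewrite (_ : (fun s => _) = fun s => \sum_i y s i ord0 * y s i ord0).
  exact: continuous_dotmx.
by apply/funext => s; apply: eq_bigr => i _; rewrite expr2.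
Qed.

End CoordinateContinuity.

Lemma posdef_coercive (R : realType) p (M : 'M[R]_p) : posdef M ->
  exists2 c : R, 0 < c & forall y, c * sqnorm y <= qf M y.
Proof.
move=> PM.
have [[y0 y0_neq0] | all0] := pselect (exists y : 'cV[R]_p, y != 0); last first.
  exists 1 => // y; have -> : y = 0 by apply: contra_notP all0 => /eqP y_neq0; exists y.
  by rewrite sqnorm0 mulr0 posdef_qf_ge0.
pose S := [set v : 'rV[R]_p | sqnorm v^T = 1].
have coordT i : continuous (fun v : 'rV[R]_p => v^T i ord0).
  by under eq_fun do rewrite mxE; exact: coord_continuous.
have sqnorm_gt0 (y : 'cV[R]_p) : y != 0 -> 0 < sqnorm y by rewrite lt_def sqnorm_eq0 sqnorm_ge0 => ->.
have normalized_in_S y : y != 0 -> S ((Num.sqrt (sqnorm y))^-1 *: y)^T.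
  move=> /sqnorm_gt0 y_gt0; rewrite /S /= trmxK sqnormZ exprVn sqr_sqrtr ?ltW //.
  by rewrite mulVf ?gt_eqF.
have S_closed : closed S.
  rewrite (_ : S = (fun v : 'rV[R]_p => sqnorm v^T) @^-1` [set 1]) //.
  by apply: preimage_closed => [v _|]; [exact: continuous_sqnorm | exact: closed_eq].
have S_sub_box : S `<=` [set v : 'rV[R]_p | forall i, `[-1, 1] (v ord0 i)].
  move=> v Sv i; rewrite /= in_itv /= -ler_norml.
  have := sqr_coord_le_sqnorm v^T i; rewrite Sv mxE -real_normK ?num_real //.
  by have := normr_ge0 (v ord0 i); nra.
have S_compact : compact S.
  exact: subclosed_compact S_closed (rV_compact (fun=> @segment_compact R (-1) 1)) S_sub_box.
have [c Sc c_min] := compact_EVT_min (ex_intro _ _ (normalized_in_S y0 y0_neq0))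
  S_compact (continuous_subspaceT (continuous_qf (M := M) coordT)).
exists (qf M c^T).
  apply: PM.2; apply: contraTneq Sc => c0.
  by rewrite notin_setE /= c0 sqnorm0 => /esym/eqP; rewrite oner_eq0.
move=> y; have [->|y_neq0] := eqVneq y 0; first by rewrite sqnorm0 mulr0 posdef_qf_ge0.
have := c_min _ (mem_set (normalized_in_S y y_neq0)).
rewrite trmxK qfZ exprVn sqr_sqrtr ?sqnorm_ge0 // mulrC.
by rewrite ler_pdivlMr ?sqnorm_gt0.
Qed.

Lemma sampling_interval (R : realType) (t : nat -> R) N s :
  t @ \oo --> +oo -> t N <= s -> exists2 k, (N <= k)%N & t k <= s < t k.+1.
Proof.
move=> t_oo tNs; have [M _ tM] := (cvgryPge _).1 t_oo (s + 1).
have : s < t (N + (maxn N M - N))%N.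
  rewrite subnKC ?leq_maxl //; apply: lt_le_trans (tM _ (leq_maxr N M)).
  by rewrite ltrDl.
elim: (maxn N M - N)%N => [|d IH]; first by rewrite addn0 ltNge tNs.
rewrite addnS; have [/IH //|tNd_le] := ltP s (t (N + d)%N).
by move=> s_lt; exists (N + d)%N; rewrite ?leq_addr ?tNd_le.
Qed.

Section Telescoping.
Variable R : numDomainType.
Implicit Types u v : nat -> R.

Lemma ler_telescope u v N j : (N <= j)%N ->
  (forall k, (N <= k < j)%N -> u k.+1 - u k <= v k - v k.+1) -> u j - u N <= v N - v j.
Proof.
move=> Nj uv; rewrite -(telescope_sumr _ Nj) -opprB -(telescope_sumr _ Nj) -sumrN.
by apply: ler_sum_nat => k /uv; rewrite opprB.
Qed.

Lemma ler_dist_telescope u v N j : (N <= j)%N ->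
  (forall k, (N <= k < j)%N -> `|u k.+1 - u k| <= v k - v k.+1) ->
  `|u j - u N| <= v N - v j.
Proof.
move=> Nj uv; rewrite -(telescope_sumr _ Nj); apply: le_trans (ler_norm_sum _ _ _) _.
rewrite -opprB -(telescope_sumr _ Nj) -sumrN.
by apply: ler_sum_nat => k /uv; rewrite opprB.
Qed.

End Telescoping.

Section DissipationConvergence.
Variables (R : realType) (t : nat -> R) (h : R -> R) (W : nat -> R) (C c : R).
Hypotheses (t_nondecr : forall k, t k <= t k.+1) (t_oo : t @ \oo --> +oo)
  (h_ge0 : forall s, 0 <= h s) (W_ge0 : forall k, 0 <= W k)
  (C_ge0 : 0 <= C) (c_ge0 : 0 <= c)
  (h_osc : forall k s, t k <= s <= t k.+1 -> `|h s - h (t k)| <= C * (W k - W k.+1))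
  (h_lb : forall k e, (forall s, t k <= s <= t k.+1 -> e <= h s) ->
     e * (t k.+1 - t k) <= c * (W k - W k.+1)).

Lemma h_osc_from N k s : (N <= k)%N -> t k <= s <= t k.+1 ->
  `|h s - h (t N)| <= C * (W N - W k.+1).
Proof.
move=> Nk ks.
have hstep j : `|h (t j.+1) - h (t j)| <= C * W j - C * W j.+1.
  by rewrite -mulrBr; apply: h_osc; rewrite lexx t_nondecr.
have chain : `|h (t k) - h (t N)| <= C * W N - C * W k.
  exact: (ler_dist_telescope (u := h \o t) (v := fun j => C * W j) Nk (fun j _ => hstep j)).
have := h_osc ks; have := ler_distD (h (t k)) (h s) (h (t N)).
rewrite !mulrBr; lra.
Qed.

Lemma cvg_dissipation : h x @[x --> +oo] --> 0.
Proof.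
apply/cvgrPdist_lt => eps eps_gt0.
pose d := eps / (4 * C + 4).
have C_gt0 : 0 < 4 * C + 4 by have := C_ge0; lra.
have d_gt0 : 0 < d by rewrite divr_gt0.
have Cd : C * d < eps / 4.
  have : (4 * C + 4) * d = eps by rewrite /d mulrC divfK // gt_eqF.
  nra.
have [N WN] : exists N, forall j, W N - W j < d.
  have Wlb : has_lbound (range W) by exists 0 => _ [k _ <-].
  have [_ [N _ <-] WN] := inf_adherent d_gt0 (conj (ex_intro _ _ (imageT W 0)) Wlb).
  by exists N => j; have := ge_inf Wlb (imageT W j); lra.
have osc k s : (N <= k)%N -> t k <= s <= t k.+1 -> `|h s - h (t N)| < eps / 4.
  move=> Nk ks; apply: le_lt_trans (h_osc_from Nk ks) _; apply: le_lt_trans Cd.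
  by apply: ler_wpM2l => //; exact/ltW/WN.
have hN : h (t N) < eps / 2.
  rewrite ltNge; apply/negP => hN.
  have [M _ tM] := (cvgryPge _).1 t_oo (t N + (c * d + 1) * (4 / eps)).
  have lb k : (N <= k < maxn N M)%N ->
      eps / 4 * t k.+1 - eps / 4 * t k <= c * W k - c * W k.+1.
    move=> /andP[Nk _]; rewrite -!mulrBr; apply: h_lb => s ks.
    by have := osc k s Nk ks; rewrite ltr_norml; lra.
  have := ler_telescope (leq_maxl N M) lb.
  have := tM _ (leq_maxr N M); set tj := t (maxn N M) => tj_ge.
  have : eps / 4 * ((c * d + 1) * (4 / eps)) = c * d + 1 by field; rewrite gt_eqF.
  have : c * (W N - W (maxn N M)) <= c * d by rewrite ler_wpM2l // ltW.
  have : eps / 4 * ((c * d + 1) * (4 / eps)) <= eps / 4 * (tj - t N).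
    by apply: ler_wpM2l; [rewrite divr_ge0 // ltW | lra].
  rewrite !mulrBr; lra.
exists (t N); split; first exact: num_real.
move=> s /ltW /(sampling_interval t_oo) [k Nk /andP[tks stk]].
have := osc k s Nk; rewrite tks ltW //= => /(_ isT).
rewrite ltr_norml sub0r normrN ger0_norm // => /andP[_ ?]; lra.
Qed.

End DissipationConvergence.

Lemma within_continuous_measurable_EFin (R : realType) (D : set R) (f : R -> R) :
  measurable D -> {within D, continuous f} -> measurable_fun D (EFin \o f).
Proof. by move=> mD cf; apply/measurable_EFinP; exact: subspace_continuous_measurable_fun. Qed.

Lemma relative_excess_le (R : realType) (J : \bar R) (a v : R) :
  0 < v -> (0 <= J)%E -> (J <= (a * v)%:E)%E -> ((J - v%:E) * v^-1%:E <= (a - 1)%:E)%E.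
Proof.
move=> v_gt0 J_ge0 J_le; have J_fin : J \is a fin_num.
  by rewrite ge0_fin_numE // (le_lt_trans J_le) ?ltey.
move: J_le; rewrite -(fineK J_fin) -EFinB -EFinM !lee_fin ler_pdivrMr //; lra.
Qed.

Lemma cvg_coord_of_sqnorm (R : realType) (T : Type) (G : set_system T) {FG : Filter G}
    p (y : T -> 'cV[R]_p) i :
  sqnorm (y s) @[s --> G] --> 0 -> y s i ord0 @[s --> G] --> 0.
Proof.
move=> /cvgrPdist_lt y0; apply/cvgrPdist_lt => e e_gt0.
apply: filterS (y0 _ (exprn_gt0 2 e_gt0)) => s; rewrite !sub0r !normrN => ys.
have := sqr_coord_le_sqnorm (y s) i; have := ler_norm (sqnorm (y s)).
rewrite -[_ ^+ 2]real_normK ?num_real //; have := normr_ge0 (y s i ord0); nra.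
Qed.

Section SampledFeedback.
Variables (R : realType) (n m : nat) (A : 'M[R]_n) (B : 'M[R]_(n, m))
  (Q : 'M[R]_n) (Rw : 'M[R]_m) (alpha : R) (P : 'M[R]_n)
  (t : nat -> R) (F : nat -> 'M[R]_(m, n)) (x : R -> 'cV[R]_n).
Hypotheses (PQ : posdef Q) (PR : posdef Rw) (alpha_gt0 : 0 < alpha) (PP : posdef P)
  (t_incr : forall k, t k < t k.+1) (t_oo : t @ \oo --> +oo)
  (x_cont : forall k (i : 'I_n), {within `[t k, t k.+1], continuous (fun s => x s i ord0)})
  (x_deriv : forall k (s : R), t k < s < t k.+1 -> forall i : 'I_n,
     is_derive s 1 (fun r => x r i ord0) ((A *m x s + B *m (F k *m x (t k))) i ord0))
  (feas : forall k, P1_feasible Q Rw P alpha x (F k) (t k) (t k.+1 - t k)).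

Let u k := F k *m x (t k).
Let V s := qf P (x s).
Let cost k s := qf Q (x s) + qf Rw (u k).
Let J k xi := Jk Q Rw x (u k) (t k) xi.

Lemma cost_ge0 k s : 0 <= cost k s.
Proof. by rewrite addr_ge0 // posdef_qf_ge0. Qed.

Lemma Jk_ge0 k xi : (0 <= J k xi)%E.
Proof. by apply: integral_ge0 => s _; rewrite lee_fin cost_ge0. Qed.

Lemma V_le_sample k xi : 0 <= xi <= t k.+1 - t k -> V (t k + xi) <= V (t k).
Proof.
move=> xi_in; have := le_trans (Jk_ge0 k xi) (feas xi_in).
by rewrite lee_fin pmulr_rge0 // subr_ge0.
Qed.

Lemma Jk_sample_le k : (J k (t k.+1 - t k) <= (alpha * (V (t k) - V (t k.+1)))%:E)%E.
Proof.
have := @feas k (t k.+1 - t k); rewrite [t k + _]addrC subrK; apply.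
by rewrite lexx subr_ge0 ltW.
Qed.

Lemma V_succ_le k : V (t k.+1) <= V (t k).
Proof.
have := le_trans (Jk_ge0 k _) (Jk_sample_le k).
by rewrite lee_fin pmulr_rge0 // subr_ge0.
Qed.

Lemma V_sample_le_init k : V (t k) <= V (t 0).
Proof. by elim: k => // k IH; exact: le_trans (V_succ_le k) IH. Qed.

Lemma V_le_init s : t 0 <= s -> V s <= V (t 0).
Proof.
move=> /(sampling_interval t_oo) [k _ /andP[tks stk]].
apply: le_trans (V_sample_le_init k); rewrite -[s](addrNK (t k)) addrC.
by apply: V_le_sample; rewrite subr_ge0 tks lerD2r ltW.
Qed.

Lemma Jtot_ge0 : (0 <= Jtot Q Rw x F t)%E.
Proof. by apply: nneseries_ge0 => k _ _; exact: Jk_ge0. Qed.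

Lemma Jtot_le : (Jtot Q Rw x F t <= (alpha * V (t 0))%:E)%E.
Proof.
have partial N : (\sum_(0 <= k < N) J k (t k.+1 - t k) <= (alpha * (V (t 0) - V (t N)))%:E)%E.
  elim: N => [|N IH]; first by rewrite big_geq // subrr mulr0.
  rewrite big_nat_recr //=; apply: le_trans (leeD IH (Jk_sample_le N)) _.
  by rewrite -EFinD -mulrDr addrA subrK.
apply: lime_le; first by apply: is_cvg_nneseries => k _ _; exact: Jk_ge0.
apply: nearW => N; apply: le_trans (partial N) _.
by rewrite lee_fin ler_wpM2l ?(ltW alpha_gt0) // lerBlDr lerDl posdef_qf_ge0.
Qed.

Let h s := sqnorm (x s).
Let dh k s := 2 * \sum_i x s i ord0 * (A *m x s + B *m u k) i ord0.

Lemma is_derive_h k s : t k < s < t k.+1 -> is_derive s 1 h (dh k s).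
Proof.
move=> s_in; have -> : h = \sum_(i < n) ((fun r => x r i ord0) ^+ 2).
  by apply/funext => r; rewrite fct_sumE; apply: eq_bigr => i _; rewrite exprfctE.
have dx2 i := is_deriveX 2 (x_deriv s_in i).
(* [apply:] fails: [dx2] and the goal use different, convertible, normed-module
   instances on [R]; [refine] unifies them up to conversion. *)
refine (is_derive_eq (is_derive_sum dx2) _).
by rewrite /dh mulr_sumr; apply: eq_bigr => i _; rewrite !mxE /= expr1 mulrA.
Qed.

Section OnSubinterval.
Variables (k : nat) (a b : R).
Hypotheses (tk_le_a : t k <= a) (b_le_tk1 : b <= t k.+1).

Lemma x_cont_sub i : {within `[a, b], continuous (fun s => x s i ord0)}.
Proof.
have := @x_cont k i; apply: continuous_subspaceW => r /=.
rewrite !in_itv /= => /andP[ar rb].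
by rewrite (le_trans tk_le_a ar) (le_trans rb b_le_tk1).
Qed.

Lemma continuous_h : {within `[a, b], continuous h}.
Proof. exact: continuous_sqnorm x_cont_sub. Qed.

Lemma continuous_cost : {within `[a, b], continuous (cost k)}.
Proof.
have cQ := continuous_qf (M := Q) x_cont_sub.
by move=> s; exact: continuousD (@cQ s) (@cst_continuous _ _ (qf Rw (u k)) s).
Qed.

Lemma continuous_dh : {within `[a, b], continuous (dh k)}.
Proof.
have cv i : {within `[a, b], continuous (fun s => (A *m x s + B *m u k) i ord0)}.
  have cA := continuous_mulmx_coord (M := A) (i := i) x_cont_sub.
  rewrite (_ : (fun s => _) = fun s => (A *m x s) i ord0 + (B *m u k) i ord0).
    by move=> s; exact: continuousD (@cA s) (@cst_continuous _ _ ((B *m u k) i ord0) s).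
  by apply/funext => s; rewrite mxE.
have cdot := continuous_dotmx x_cont_sub cv.
by move=> s; exact: continuousM (@cst_continuous _ _ (2 : R) s) (@cdot s).
Qed.

End OnSubinterval.

Lemma integral_le_cost k s (f : R -> \bar R) (K : R) : t k <= s <= t k.+1 -> 0 <= K ->
  measurable_fun `[t k, s] f ->
  (forall r, t k <= r <= s -> (0 <= f r <= (K * cost k r)%:E)%E) ->
  (\int[lebesgue_measure]_(r in `[t k, s]) f r <=
    (K * (alpha * (V (t k) - V (t k.+1))))%:E)%E.
Proof.
move=> /andP[tks stk1] K_ge0 mf f_bound.
have mcost a b : t k <= a -> b <= t k.+1 -> measurable_fun `[a, b] (EFin \o cost k).
  by move=> ha hb; exact: within_continuous_measurable_EFin (continuous_cost ha hb).
apply: (@le_trans _ _ (\int[lebesgue_measure]_(r in `[t k, s]) (K%:E * (cost k r)%:E))%E).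
  apply: ge0_le_integral => //.
  - by move=> r /=; rewrite in_itv /= => /f_bound /andP[].
  - exact: measurable_funeM (mcost _ _ (lexx _) stk1).
  - by move=> r /=; rewrite in_itv /= => /f_bound /andP[_]; rewrite EFinM.
rewrite ge0_integralZl_EFin //; last 2 first.
- by move=> r _; rewrite lee_fin cost_ge0.
- exact: mcost.
rewrite EFinM lee_wpmul2l ?lee_fin //; apply: le_trans (Jk_sample_le k).
rewrite /J /Jk [t k + _]addrC subrK; apply: ge0_subset_integral => //.
- exact: mcost.
- by move=> r _; rewrite lee_fin cost_ge0.
- by move=> r /=; rewrite !in_itv /= => /andP[-> /le_trans->].
Qed.

Lemma sqnorm_le_cost : exists2 c, 0 < c & forall k s, c * (h s + sqnorm (u k)) <= cost k s.
Proof.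
have [cQ cQ_gt0 hQ] := posdef_coercive PQ; have [cR cR_gt0 hR] := posdef_coercive PR.
exists (Num.min cQ cR); first by rewrite lt_min cQ_gt0.
move=> k s; rewrite mulrDr; apply: lerD.
- by apply: le_trans (hQ (x s)); rewrite ler_wpM2r ?sqnorm_ge0 // ge_min lexx.
- by apply: le_trans (hR (u k)); rewrite ler_wpM2r ?sqnorm_ge0 // ge_min lexx orbT.
Qed.

Lemma dh_le_cost : exists2 C, 0 <= C & forall k s, `|dh k s| <= C * cost k s.
Proof.
have [c c_gt0 hc] := sqnorm_le_cost.
have MA_ge0 := mx_abs_sum_ge0 A; have MB_ge0 := mx_abs_sum_ge0 B.
exists (2 * (2 * mx_abs_sum A + mx_abs_sum B) / c); first by rewrite divr_ge0 ?(ltW c_gt0) // !(mulr_ge0, addr_ge0).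
move=> k s; set K := 2 * mx_abs_sum A + mx_abs_sum B.
have K_ge0 : 0 <= K by rewrite addr_ge0 ?mulr_ge0.
rewrite (_ : 2 * K / c * _ = 2 * (K * (cost k s / c))); last by field; rewrite gt_eqF.
rewrite /dh normrM ger0_norm // ler_pM2l //.
apply: le_trans (norm_dot_affine_le A B (x s) (u k)) _.
by rewrite ler_wpM2l // ler_pdivlMr // mulrC hc.
Qed.

Lemma h_ftc k s : t k < s -> s <= t k.+1 ->
  (\int[lebesgue_measure]_(r in `[t k, s]) (dh k r)%:E = (h s)%:E - (h (t k))%:E)%E.
Proof.
move=> tks stk1; have r_in r : t k < r < s -> t k < r < t k.+1.
  by move=> /andP[-> rs]; rewrite (lt_le_trans rs stk1).
apply: (continuous_FTC2 tks (continuous_dh (lexx _) stk1)).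

- have [_ hl hr] := (continuous_within_itvP _ tks).1 (continuous_h (lexx _) stk1).
  split => // r; rewrite in_itv /= => /r_in.
  by case/is_derive_h.
- move=> r; rewrite in_itv /= => /r_in; rewrite derive1E.
  by case/is_derive_h.
Qed.

Lemma h_osc : exists2 C, 0 <= C & forall k s, t k <= s <= t k.+1 ->
  `|h s - h (t k)| <= C * (V (t k) - V (t k.+1)).
Proof.
have [C C_ge0 dh_le] := dh_le_cost.
exists (C * alpha); first by rewrite mulr_ge0 // ltW.
move=> k s /andP[tks stk1]; have dV : 0 <= V (t k) - V (t k.+1) by rewrite subr_ge0 V_succ_le.
have [<-|tk_neq] := eqVneq (t k) s.
  by rewrite subrr normr0 !mulr_ge0 // ltW.
have tk_lt : t k < s by rewrite lt_neqAle tk_neq tks.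
have mI : measurable (`[t k, s]%classic : set R) := measurable_itv _.
have mdh := within_continuous_measurable_EFin mI (continuous_dh (lexx _) stk1).
rewrite -lee_fin -abse_EFin EFinB -(h_ftc tk_lt stk1) -mulrA.
apply: le_trans (le_abse_integral lebesgue_measure mI mdh) _.
apply: integral_le_cost => //; first by rewrite tks.
- exact: measurableT_comp (@abse_measurable R setT) mdh.
- by move=> r _; rewrite abse_ge0 /comp abse_EFin lee_fin dh_le.
Qed.

Lemma h_lb : exists2 c, 0 <= c & forall k e, (forall s, t k <= s <= t k.+1 -> e <= h s) ->
  e * (t k.+1 - t k) <= c * (V (t k) - V (t k.+1)).
Proof.
have [c c_gt0 hc] := sqnorm_le_cost.
exists (c^-1 * alpha); first by rewrite mulr_ge0 ?invr_ge0 ?ltW.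
move=> k e e_le; have dV : 0 <= V (t k) - V (t k.+1) by rewrite subr_ge0 V_succ_le.
have dt : 0 < t k.+1 - t k by rewrite subr_gt0.
have [e_le0|e_gt0] := lerP e 0.
  have rhs_ge0 : 0 <= c^-1 * alpha * (V (t k) - V (t k.+1)).
    by rewrite !mulr_ge0 // ?invr_ge0 ltW.
  by apply: le_trans rhs_ge0; rewrite mulr_le0_ge0 // ltW.
have mI : measurable (`[t k, t k.+1]%classic : set R) := measurable_itv _.
rewrite -lee_fin -mulrA.
have -> : ((e * (t k.+1 - t k))%:E =
    \int[lebesgue_measure]_(r in `[t k, t k.+1]) (cst e%:E) r)%E.
  have len : lebesgue_measure (`[t k, t k.+1]%classic : set R) = ((t k.+1 - t k)%:E)%E.
    by rewrite lebesgue_measure_itv /= lte_fin t_incr EFinB.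
  by rewrite integral_cst // EFinM; congr (_ * _)%E; exact/esym/len.
apply: integral_le_cost => //.
- by rewrite lexx ltW.
- by rewrite invr_ge0 ltW.
- move=> r r_in; rewrite /= !lee_fin (ltW e_gt0) /= mulrC ler_pdivlMr //.
  have := hc k r; have := e_le r r_in; have := sqnorm_ge0 (u k); rewrite /h; nra.
Qed.

Lemma sqnorm_x_cvg0 : h s @[s --> +oo] --> 0.
Proof.
have [C C_ge0 osc] := h_osc; have [c c_ge0 lb] := h_lb.
apply: (cvg_dissipation _ t_oo _ _ C_ge0 c_ge0 osc lb) => [k|s|k].
- exact/ltW.
- exact: sqnorm_ge0.
- exact: posdef_qf_ge0.
Qed.

Lemma sampled_feedback_guarantees :
  ((forall s, t 0 <= s -> qf P (x s) <= qf P (x (t 0))) /\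
   (forall i : 'I_n, (fun s => x s i ord0) @ +oo --> 0)) /\
  (x (t 0) != 0 -> (nu Q Rw P x F t (x (t 0)) <= (alpha - 1)%:E)%E).
Proof.
split; [split|].
- exact: V_le_init.
- by move=> i; apply: cvg_coord_of_sqnorm; exact: sqnorm_x_cvg0.
- by move=> x0_neq0; apply: relative_excess_le Jtot_ge0 Jtot_le; exact: PP.2.
Qed.

End SampledFeedback.

Unset Implicit Arguments.

Theorem theorem2 (R : realType) (n m : nat)
  (A : 'M[R]_n) (B : 'M[R]_(n, m)) (Q : 'M[R]_n) (Rw : 'M[R]_m)
  (alpha gamma eta : R) (Ft : 'M[R]_(m, n)) (Pt : 'M[R]_n)
  (x0 : 'cV[R]_n) (t : nat -> R) (F : nat -> 'M[R]_(m, n)) (x : R -> 'cV[R]_n) :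
  stabilizable A B ->
  posdef Q -> posdef Rw ->
  1 < alpha -> 0 <= gamma -> 0 <= eta ->
  hurwitz (A + B *m Ft) ->
  posdef Pt ->
  (A + B *m Ft)^T *m Pt + Pt *m (A + B *m Ft) + Q + Ft^T *m Rw *m Ft = 0 ->
  (* sampling instants 0 = t_0 < t_1 < ... , t_k -> +oo *)
  t 0%N = 0 -> (forall k, t k < t k.+1) -> t @ \oo --> +oo ->
  (* x is the solution of dx/dt = A x + B u, x(0) = x0, u(s) = F_k x(t_k) on [t_k, t_{k+1}) *)
  x 0 = x0 ->
  (forall k (i : 'I_n), {within `[t k, t k.+1], continuous (fun s => x s i ord0)}) ->
  (forall k (s : R), t k < s < t k.+1 -> forall i : 'I_n,
     is_derive s 1 (fun r => x r i ord0) ((A *m x s + B *m (F k *m x (t k))) i ord0)) ->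
  (* (F_k, delta_k) feasible for (P1) at every k *)
  (forall k, P1_feasible Q Rw Pt alpha x (F k) (t k) (t k.+1 - t k)) ->
  (* stabilizing: Lyapunov-stable (V nonincreasing bound) and x(t) -> 0 *)
  ((forall s, 0 <= s -> qf Pt (x s) <= qf Pt x0) /\
   (forall i : 'I_n, (fun s => x s i ord0) @ +oo --> 0)) /\
  (x0 != 0 -> (nu Q Rw Pt x F t x0 <= (alpha - 1)%:E)%E).
Proof.
move=> _ PQ PR alpha_gt1 _ _ _ PP _ t0 t_incr t_oo x00 x_cont x_deriv feas.
have alpha_gt0 : 0 < alpha := lt_trans ltr01 alpha_gt1.
have := sampled_feedback_guarantees PQ PR alpha_gt0 PP t_incr t_oo x_cont x_deriv feas.
by rewrite t0 x00.
Qed.
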